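(* Let $(X_n)_{n\ge0}$ be the Kendall random walk with step distribution $\nu\in\mathcal P_s$, $\nu(\{0\})=0$, let $a\ge0$, and let $\tau^{-}_{a,w}=\min\{n\ge1: X_n\le a\}$ (weak descending ladder epoch, $\min\emptyset=\infty$). Then $\mathbb P(\tau^-_{a,w}=1)=F(a)$ and for every $n\ge0$ $$\mathbb P(\tau^-_{a,w}>n+1)=\frac1{2^n}\big(1-F(a)\big).$$
   Context: Fix $\alpha>0$. $\mathcal P_s$ is the set of symmetric Borel probability measures on $\mathbb R$. For $x\in\mathbb R$, $\widetilde\delta_x=\frac12(\delta_x+\delta_{-x})$. For a probability measure $\lambda=\mathcal L(X)$ and $c>0$, $T_c\lambda=\mathcal L(cX)$, and $T_0\lambda=\delta_0$. $\widetilde\pi_{2\alpha}$ is the symmetric Pareto probability measure with density $\alpha|y|^{-2\alpha-1}\mathbf 1_{\{|y|\ge1\}}$. The Kendall convolution $\vartriangle_\alpha$ on $\mathcal P_s$ is defined by $\widetilde\delta_x\vartriangle_\alpha\widetilde\delta_y=T_M\big(\varrho^\alpha\widetilde\pi_{2\alpha}+(1-\varrho^\alpha)\widetilde\delta_1\big)$ where $M=\max(|x|,|y|)$, $m=\min(|x|,|y|)$, $\varrho=m/M$ (and $\varrho=0$ if $M=0$), extended by $(\nu_1\vartriangle_\alpha\nu_2)(A)=\int\int(\widetilde\delta_x\vartriangle_\alpha\widetilde\delta_y)(A)\,\nu_1(dx)\nu_2(dy)$. For $x\in\mathbb R$ and $\mu\in\mathcal P_s$ we write $\delta_x\vartriangle_\alpha\mu:=\widetilde\delta_x\vartriangle_\alpha\mu$.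 $F(t)=\nu((-\infty,t])$. The Kendall random walk with step distribution $\nu$ is the Markov chain $(X_n)_{n\ge0}$ with $X_0=0$ and transition kernel $\mathbb P(X_{k+1}\in A\mid X_k=x)=(\delta_x\vartriangle_\alpha\nu)(A)$. *)

From HB Require Import structures.
From mathcomp Require Import all_boot all_order all_algebra.
From mathcomp Require Import all_classical all_reals all_analysis.
Set Implicit Arguments. Unset Strict Implicit. Unset Printing Implicit Defensive.
Import Order.TTheory GRing.Theory Num.Theory numFieldNormedType.Exports.
Local Open Scope classical_set_scope.
Local Open Scope ring_scope.

Section Kendall.
Variable R : realType.

(* integral of g against the symmetric Pareto law ~pi_{2alpha}, given by its
   density alpha |z|^(-2alpha-1) 1_{|z|>=1} w.r.t. Lebesgue measure *)
Definition pareto_int (alpha : R) (g : R -> \bar R) : \bar R :=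
  (\int[lebesgue_measure]_(z in [set z : R | (1 <= `|z|)%R])
     (g z * (alpha * (`|z| `^ (- (2 * alpha) - 1)))%R%:E))%E.

(* integral of g against ~delta_u (Kendall-conv) ~delta_y
   = T_M (rho^alpha ~pi_{2alpha} + (1 - rho^alpha) ~delta_1) *)
Definition kendall_pair_int (alpha : R) (g : R -> \bar R) (u y : R) : \bar R :=
  let M := Num.max `|u| `|y| in
  let m := Num.min `|u| `|y| in
  if M == 0 then g 0 (* T_0 lambda = delta_0 *)
  else let rho := m / M in
   ((rho `^ alpha)%R%:E * pareto_int alpha (fun z : R => g (M * z)%R)
    + (1 - rho `^ alpha)%R%:E * ((2^-1)%R%:E * (g M + g (- M)%R)))%E.

(* integral of g against delta_x (Kendall-conv) nu
   = int int (~delta_u (Kendall-conv) ~delta_y) ~delta_x(du) nu(dy) *)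
Definition kendall_step (alpha : R) (nu : probability R R) (g : R -> \bar R)
  (x : R) : \bar R :=
  (\int[nu]_y ((2^-1)%R%:E *
     (kendall_pair_int alpha g x y + kendall_pair_int alpha g (- x)%R y)))%E.

(* path_int n A x = P_x(X_1 in A 1, ..., X_n in A n) for the chain with
   transition kernel x |-> delta_x (Kendall-conv) nu *)
Fixpoint path_int (alpha : R) (nu : probability R R) (n : nat)
  (A : nat -> set R) (x : R) : \bar R :=
  match n with
  | 0 => 1%E
  | n'.+1 => kendall_step alpha nu
      (fun z => ((\1_(A 1%N) z)%:E * path_int alpha nu n' (fun k => A k.+1) z)%E) x
  end.

(* X is the Kendall random walk with step distribution nu started at X_0 = 0:
   its finite-dimensional distributions are those of the Markov chain with
   X_0 = 0 and transition kernel P(X_{k+1} in A | X_k = x) = (delta_x Kendall-conv nu)(A). *)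
Definition is_kendall_walk (alpha : R) (nu : probability R R)
  (d : measure_display) (T : measurableType d) (P : probability T R)
  (X : nat -> T -> R) : Prop :=
  (forall n, measurable_fun setT (X n)) /\
  (forall (n : nat) (A : nat -> set R), (forall k, measurable (A k)) ->
     P [set w | forall k, (k <= n)%N -> A k (X k w)]
     = ((\1_(A 0%N) 0)%:E * path_int alpha nu n A 0)%E).

End Kendall.

(* minimal n with p n, or None (= infinity) if there is none *)
Definition first_hit (p : nat -> Prop) : option nat :=
  if `[< exists n, p n >] then
    Some (xget 0%N [set n | p n /\ forall m, p m -> (n <= m)%N])
  else None.

Definition weak_desc_ladder (R : realType) {d} {T : measurableType d}
  (a : R) (X : nat -> T -> R) (w : T) : option nat :=
  first_hit (fun n => (1 <= n)%N /\ X n w <= a).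

From HB Require Import structures.
From mathcomp Require Import all_boot all_order all_algebra.
From mathcomp Require Import all_classical all_reals all_analysis.
From mathcomp Require Import ring lra.
Set Implicit Arguments. Unset Strict Implicit. Unset Printing Implicit Defensive.
Import Order.TTheory GRing.Theory Num.Theory numFieldNormedType.Exports.
Local Open Scope classical_set_scope.
Local Open Scope ring_scope.

(* Once |x| > a, a Kendall step from x lands at modulus at least
   M = max(|x|, |y|) > a whatever the step y, and given y the new position is
   symmetric (both ~pi_{2alpha} and ~delta_1 are), so the walk stays above a
   with probability exactly 1/2.  From X_0 = 0 the first step lands at +-|Y_1|
   with equal probability, hence P(X_1 > a) = nu(|y| > a) / 2 = 1 - F(a) by the
   symmetry of nu.  Finally {tau > n + 1} = {X_1 > a, ..., X_(n+1) > a}. *)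

Section first_hit.
Variable p : nat -> Prop.

Lemma first_hitP :
  match first_hit p with
  | Some k => p k /\ (forall m, p m -> (k <= m)%N)
  | None => forall m, ~ p m
  end.
Proof.
rewrite /first_hit; case: asboolP => [[n pn]|nex]; last first.
  by move=> m pm; apply: nex; exists m.
have exb : exists n, `[< p n >] by exists n; apply/asboolP.
have ex_min : exists k, p k /\ (forall m, p m -> (k <= m)%N).
  have [k /asboolP pk kmin] := ex_minnP exb.
  by exists k; split=> // m pm; apply: kmin; apply/asboolP.
exact: xgetPex ex_min.
Qed.

Lemma first_hit_gtP n :
  (match first_hit p with Some k => (n < k)%N | None => True end) <->
  (forall k, (k <= n)%N -> ~ p k).
Proof.
have := first_hitP; case: first_hit => [k [pk kmin]|none]; split=> //.
- by move=> nk m mn /kmin km; move: (leq_trans km mn); rewrite leqNgt nk.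
- by move=> h; rewrite ltnNge; apply/negP => /h.
Qed.

Lemma first_hit_eqP k :
  first_hit p = Some k <-> p k /\ (forall m, (m < k)%N -> ~ p m).
Proof.
have := first_hitP; case: first_hit => [j [pj jmin]|none]; split.
- by case=> <-; split=> // m mj /jmin; rewrite leqNgt mj.
- case=> pk kmin; congr Some; apply/eqP; rewrite eqn_leq jmin //.
  by rewrite leqNgt; apply/negP => /kmin.
- by [].
- by case=> /none.
Qed.

End first_hit.

(* No constraint at time 0: the ladder epoch only looks at times n >= 1. *)
Definition stay_above {R : realType} (a : R) (k : nat) : set R :=
  if k is 0 then setT else `]a, +oo[%classic.

Section weak_desc_ladder.
Variables (R : realType) (d : measure_display) (T : measurableType d).
Variables (a : R) (X : nat -> T -> R).

Lemma weak_desc_ladder_eq1 :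
  [set w | weak_desc_ladder a X w = Some 1%N] = ~` (X 1%N @^-1` `]a, +oo[%classic).
Proof.
apply/seteqP; split=> w /=; rewrite /weak_desc_ladder first_hit_eqP in_itv /= andbT.
- by case=> -[_ Xa] _; rewrite ltNge Xa.
- by move/negP; rewrite -leNgt => Xa; split=> // -[|m] // _ [].
Qed.

Lemma weak_desc_ladder_gt n :
  [set w | match weak_desc_ladder a X w with Some k => (n < k)%N | None => True end] =
  [set w : T | forall k, (k <= n)%N -> stay_above a k (X k w)].
Proof.
apply/seteqP; split=> w /=; rewrite first_hit_gtP.
- move=> h [//|k] kn /=; rewrite in_itv /= andbT ltNge.
  by apply/negP => Xa; exact: h kn (conj isT Xa).
- move=> h k kn [k0 Xa]; case: k k0 kn Xa => [//|k] _ /h.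
  by rewrite /= in_itv /= andbT ltNge => /negP.
Qed.

End weak_desc_ladder.

Section kendall_step.
Variable R : realType.

Lemma indic_itv_gt (a z : R) : \1_(`]a, +oo[%classic) z = if a < z then 1 else 0 :> R.
Proof. by rewrite indicE mem_setE in_itv /= andbT; case: ltP. Qed.

Lemma indic_abs_gt (a y : R) : \1_[set z : R | a < `|z|] y = if a < `|y| then 1 else 0 :> R.
Proof. by rewrite indicE; case: ifPn => h; [rewrite mem_set | rewrite memNset //= (negbTE h)]. Qed.

Lemma abs_gt_setU (a : R) :
  [set z : R | a < `|z|] = `]a, +oo[%classic `|` `]-oo, (- a)%R[%classic.
Proof.
apply/seteqP; split=> z /=; rewrite !in_itv /= andbT ltr_normr ltrNr.
  by move/orP.
by move=> ?; apply/orP.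
Qed.

Lemma measurable_abs_gt (a : R) : measurable [set z : R | a < `|z|].
Proof. by rewrite abs_gt_setU; apply: measurableU; exact: measurable_itv. Qed.

Lemma symmetric_prob_abs_gt (nu : probability R R) (a : R) : 0 <= a ->
  (forall A : set R, measurable A -> nu [set x | A (- x)] = nu A) ->
  nu [set z : R | a < `|z|] = (2%:E * (1 - nu `]-oo, a]%classic))%E.
Proof.
move=> a0 nu_sym.
have disj : `]a, +oo[%classic `&` `]-oo, (- a)%R[%classic = set0 :> set R.
  by apply/seteqP; split=> z //=; rewrite !in_itv /= andbT => -[az za]; lra.
have mirror : nu (`]-oo, (- a)%R[%classic : set R) = nu `]a, +oo[%classic.
  rewrite -nu_sym; last exact: measurable_itv.
  by congr (nu _); apply/funext => z /=; rewrite !in_itv /= andbT ltrN2.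
have upper : nu `]a, +oo[%classic = (1 - nu `]-oo, a]%classic)%E.
  by rewrite -setCitvl probability_setC //; exact: measurable_itv.
have finF : nu `]-oo, a]%classic \is a fin_num.
  by apply: fin_num_measure; exact: measurable_itv.
rewrite (abs_gt_setU a) measureU //; try exact: measurable_itv.
transitivity (nu `]a, +oo[%classic + nu `]a, +oo[%classic)%E; first by congr (_ + _)%E.
rewrite upper -(fineK finF) -EFinB -EFinD -EFinM.
by congr EFin; ring.
Qed.

Lemma powRN_cvgy0 (p : R) : 0 < p -> x `^ (- p) @[x --> +oo] --> 0.
Proof.
move=> p0; apply/cvgrPdist_lt => e e0.
have K0 : 0 < (e^-1) `^ (p^-1) by rewrite powR_gt0 // invr_gt0.
near=> x.
have x0 : 0 < x by near: x; exact: nbhs_pinfty_gt.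
have xK : (e^-1) `^ (p^-1) < x by near: x; apply: nbhs_pinfty_gt; rewrite num_real.
rewrite sub0r normrN ger0_norm ?powR_ge0 // powRN.
rewrite -[e]invrK ltf_pV2 ?posrE ?invr_gt0 ?powR_gt0 //.
have := gt0_ltr_powR p0 _ _ xK; rewrite !nnegrE (ltW K0) (ltW x0) => /(_ isT isT).
by rewrite -powRrM mulVf ?gt_eqF // powRr1 // ltW // invr_gt0.
Unshelve. all: by end_near. Qed.

Variable alpha : R.
Hypothesis alpha_gt0 : 0 < alpha.

Lemma pareto_tail_integral (c : R) : 0 <= c ->
  (\int[lebesgue_measure]_(z in `[1%R, +oo[%classic)
     (c * (alpha * z `^ (- (2 * alpha) - 1)))%:E = (c / 2)%:E)%E.
Proof.
move=> c0.
pose F (x : R) := - (c / 2) * x `^ (- (2 * alpha)).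
have dF (x : R) : 0 < x -> is_derive x 1 F (c * (alpha * x `^ (- (2 * alpha) - 1))).
  move=> x0; have := is_deriveZ (- (c / 2)) (is_derive1_powR (- (2 * alpha)) x0).
  suff -> : (- (c / 2)) *: (- (2 * alpha) * x `^ (- (2 * alpha) - 1)) =
     c * (alpha * x `^ (- (2 * alpha) - 1)) by [].
  by rewrite /GRing.scale /=; field.
have -> : c / 2 = 0 - F 1 by rewrite /F powR1 mulr1 sub0r opprK.
apply: ge0_continuous_FTC2y.
- by move=> x _; rewrite !mulr_ge0 ?powR_ge0 // ltW.
- apply: continuous_in_subspaceT => x; rewrite inE /= in_itv /= andbT => x1.
  have powR_cont : {for x, continuous (@powR R ^~ (- (2 * alpha) - 1))}.
    apply: differentiable_continuous; apply/derivable1_diffP.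
    by apply: derivable_powR; rewrite in_itv /= andbT (lt_le_trans ltr01).
  by apply: cvgMl_tmp; apply: cvgMl_tmp; exact: powR_cont.
- rewrite /F -[0](mulr0 (- (c / 2))); apply: cvgMl_tmp.
  by apply: powRN_cvgy0; rewrite mulr_gt0.
- move=> x x1; have x0 : 0 < x by apply: lt_trans x1.
  by have [] := dF x x0.
- apply: cvg_at_right_filter; apply: differentiable_continuous.
  by apply/derivable1_diffP; have [] := dF 1 ltr01.
- move=> x; rewrite in_itv /= andbT => x1; have x0 : 0 < x by apply: lt_trans x1.
  by rewrite derive1E; have [_ ->] := dF x x0.
Qed.

Lemma pareto_int_half (c : R) (g : R -> \bar R) : 0 <= c ->
  (forall z, 1 <= `|z| -> g z = (if 0 < z then c else 0)%:E) ->
  pareto_int alpha g = (c / 2)%:E.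
Proof.
move=> c0 hg; rewrite /pareto_int -(pareto_tail_integral c0).
have sub1 : `[1%R, +oo[%classic `<=` [set z : R | 1 <= `|z|].
  by move=> z /=; rewrite in_itv /= andbT => z1; rewrite ger0_norm // (le_trans ler01).
rewrite -(setIidr sub1) integral_mkcondr; apply: eq_integral => z.
rewrite inE /= => z1; rewrite hg // patchE mem_setE in_itv /= andbT.
have [z0|z0] := ltP 0 z.
  by rewrite -[z in 1 <= z](gtr0_norm z0) z1 EFinM gtr0_norm.
by rewrite ifF ?mul0e //; apply/negbTE; rewrite -ltNge (le_lt_trans z0 ltr01).
Qed.

Lemma kendall_pair_int_half (c : R) (g : R -> \bar R) (u y : R) : 0 <= c ->
  let M := Num.max `|u| `|y| in 0 < M ->
  (forall w, M <= `|w| -> g w = (if 0 < w then c else 0)%:E) ->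
  kendall_pair_int alpha g u y = (c / 2)%:E.
Proof.
move=> c0 M M0 hg; rewrite /kendall_pair_int -/M (gt_eqF M0).
rewrite (@pareto_int_half c) //; last first.
  move=> z z1; rewrite hg ?pmulr_rgt0 // normrM gtr0_norm //.
  by rewrite ler_peMr // ltW.
rewrite !hg ?normrN ?(gtr0_norm M0) // M0 oppr_gt0 ltNge (ltW M0) /=.
by rewrite adde0 -!EFinM -EFinD; congr EFin; ring.
Qed.

Lemma kendall_pair_int_0l (g : R -> \bar R) (y : R) : y != 0 ->
  kendall_pair_int alpha g 0 y = ((2^-1)%:E * (g `|y|%R + g (- `|y|)%R))%E.
Proof.
move=> y0; rewrite /kendall_pair_int normr0 max_r ?min_l // normr_eq0 (negbTE y0).
by rewrite mul0r powR0 ?gt_eqF // mul0e add0e subr0 mul1e.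
Qed.

Variable nu : probability R R.

Lemma path_int_stay_above (a : R) (m : nat) (x : R) : 0 <= a -> a < `|x| ->
  path_int alpha nu m (fun=> `]a, +oo[%classic) x = (2 ^- m)%:E.
Proof.
move=> a0; elim: m x => [|m IH] x ax; first by rewrite expr0 invr1.
pose g z := ((\1_(`]a, +oo[%classic) z)%:E *
             path_int alpha nu m (fun=> `]a, +oo[%classic) z)%E.
have half u y : a < `|u| -> kendall_pair_int alpha g u y = (2 ^- m / 2)%:E.
  move=> au; have aM : a < Num.max `|u| `|y| by rewrite lt_max au.
  apply: kendall_pair_int_half; first by rewrite invr_ge0 exprn_ge0.
    exact: le_lt_trans aM.
  move=> w Mw; rewrite /g indic_itv_gt; have [w0|w0] := ltP 0 w.
    have aw : a < w by rewrite (lt_le_trans aM) // -(gtr0_norm w0).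
    by rewrite aw mul1e IH // (lt_le_trans aw) // ler_norm.
  by rewrite ltNge (le_trans w0 a0) mul0e.
rewrite /= /kendall_step -/g.
under eq_integral => y _ do rewrite half // half ?normrN //.
rewrite integral_cst // [X in (_ * X)%E]probability_setT mule1 exprS invfM.
by congr EFin; field.
Qed.

Lemma path_int_stay_above_from0 (a : R) (n : nat) : 0 <= a ->
  path_int alpha nu n.+1 (fun=> `]a, +oo[%classic) 0 =
  ((2 ^- n / 2)%:E * nu [set y | (a < `|y|)%R])%E.
Proof.
move=> a0.
pose g z := ((\1_(`]a, +oo[%classic) z)%:E *
             path_int alpha nu n (fun=> `]a, +oo[%classic) z)%E.
have step y : ((2^-1)%:E * (kendall_pair_int alpha g 0 y + kendall_pair_int alpha g 0 y))%E
    = ((2 ^- n / 2) * \1_[set z : R | a < `|z|] y)%:E.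
  rewrite indic_abs_gt.
  have [->|y0] := eqVneq y 0.
    rewrite /kendall_pair_int normr0 maxxx eqxx /g indic_itv_gt ltNge a0 mul0e.
    by rewrite addr0 mule0 mulr0.
  have aNy : (a < - `|y|) = false.
    by apply/negbTE; rewrite -leNgt (le_trans _ a0) // oppr_le0.
  rewrite kendall_pair_int_0l // /g !indic_itv_gt aNy mul0e adde0.
  have [ay|ay] := ltP a `|y|; last by rewrite !mul0e !mule0 adde0 mule0 mulr0.
  by rewrite path_int_stay_above ?normr_id // -!EFinM; congr EFin; field.
rewrite /= /kendall_step -/g.
under eq_integral => y _ do rewrite [- 0]oppr0 step.
rewrite (@integralZl_indic _ _ _ nu _ measurableT (fun=> [set z : R | a < `|z|])).
- by rewrite integral_indic ?setIT //; exact: measurable_abs_gt.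
- by rewrite ltNge divr_ge0 // invr_ge0 exprn_ge0.
- exact: measurable_abs_gt.
Qed.

Lemma kendall_walk_stay_above (d : measure_display) (T : measurableType d)
    (P : probability T R) (X : nat -> T -> R) (a : R) (n : nat) :
  (forall A : set R, measurable A -> nu [set x | A (- x)] = nu A) ->
  is_kendall_walk alpha nu P X -> 0 <= a ->
  P [set w | forall k, (k <= n.+1)%N -> stay_above a k (X k w)] =
  ((2 ^- n)%:E * (1 - nu `]-oo, a]%classic))%E.
Proof.
move=> nu_sym [_ PX] a0.
have mA k : measurable (stay_above a k).
  by case: k => [|k]; [exact: measurableT | exact: measurable_itv].
rewrite PX // indicE in_setT mul1e.
(* path_int never reads the set indexed by 0 *)
rewrite (_ : path_int _ _ _ _ _ = path_int alpha nu n.+1 (fun=> `]a, +oo[%classic) 0) //.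
rewrite path_int_stay_above_from0 // symmetric_prob_abs_gt // muleA -EFinM.
by congr (_ * _)%E; congr EFin; field.
Qed.

End kendall_step.

Theorem lemma8 (R : realType) (alpha : R) (nu : probability R R)
  (d : measure_display) (T : measurableType d) (P : probability T R)
  (X : nat -> T -> R) (a : R) :
  0 < alpha ->
  (forall A : set R, measurable A -> nu [set x | A (- x)] = nu A) ->
  nu [set 0] = 0%E ->
  is_kendall_walk alpha nu P X ->
  0 <= a ->
  P [set w | weak_desc_ladder a X w = Some 1%N] = nu `]-oo, a]%classic /\
  (forall n : nat,
     P [set w | match weak_desc_ladder a X w with
                | Some k => (n.+1 < k)%N
                | None => True
                end]
     = ((2 ^- n)%:E * (1 - nu `]-oo, a]%classic))%E).
Proof.
move=> alpha_gt0 nu_sym _ walk a0.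
have stay n := kendall_walk_stay_above alpha_gt0 n nu_sym walk a0.
split=> [|n]; last by rewrite weak_desc_ladder_gt stay.
have mX1 : measurable (X 1%N @^-1` `]a, +oo[%classic).
  by rewrite -[X 1%N @^-1` _]setTI; apply: (walk.1 1%N measurableT); exact: measurable_itv.
rewrite weak_desc_ladder_eq1 probability_setC //.
have -> : X 1%N @^-1` `]a, +oo[%classic =
          [set w | forall k, (k <= 1)%N -> stay_above a k (X k w)].
  by apply/seteqP; split=> w /=; [move=> Xa [|[|]] // | move=> h; exact: (h 1%N)].
have finF : nu `]-oo, a]%classic \is a fin_num.
  by apply: fin_num_measure; exact: measurable_itv.
rewrite stay expr0 invr1 mul1e -(fineK finF) -!EFinB.
by congr EFin; ring.
Qed.
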